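(* Let $N\ge 2$ and consider the synchronous-play slotted-ALOHA game among $N$ players in which player $i$ chooses a transmission (access) probability $q_i\in[0,1]$ and has net utility $$V_i(\underline{q})=C_i\log\gamma_i(\underline{q})+A_i\,\alpha_i(\underline{q}_{-i})\,\overline{\gamma}_{-i}(\underline{q})-M_i q_i,$$ where $\gamma_i(\underline{q})=q_i\prod_{j\ne i}(1-q_j)$, $\alpha_i(\underline{q}_{-i})=\prod_{j\ne i}(1-q_j)$, and $\overline{\gamma}_{-i}(\underline{q})=\frac{1}{N-1}\sum_{j\ne i}\gamma_j(\underline{q})$, with $C_i,M_i>0$ and $A_i\ge 0$. Suppose all players have the same normalized parameters $c:=C_i/M_i<1$ and $a:=A_i/M_i$. Then there is a symmetric Nash equilibrium $\underline{q}^*=q^*\underline{1}$ (where $\underline{1}$ is the all-ones vector in $\mathbb{R}^N$), where $0<q^*<1$ is a solution of $$f(q):=a q^2(1-q)^{2N-3}+q-c=0.$$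
   Context: $\underline{q}=(q_1,\dots,q_N)$ is the profile of access probabilities and $\underline{q}_{-i}$ is the profile of all players other than $i$. $\gamma_i$ is player $i$'s mean throughput (probability of a successful transmission by $i$ in a slot), $\alpha_i$ is player $i$'s dynamic altruism factor, and $\overline{\gamma}_{-i}$ is the mean throughput of the other players. A Nash equilibrium is a profile $\underline{q}^*$ such that for each $i$, $q_i^*$ maximizes $V_i(q_i;\underline{q}^*_{-i})$ over $q_i\in[0,1]$ (with $\log 0=-\infty$). *)

From mathcomp Require Import all_boot all_order all_algebra.
From mathcomp Require Import all_classical all_reals all_analysis.
Set Implicit Arguments. Unset Strict Implicit. Unset Printing Implicit Defensive.
Import Order.TTheory GRing.Theory Num.Theory.
Local Open Scope ring_scope.

Section Aloha.
Variables (R : realType) (N : nat).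

Definition profile := 'I_N -> R.

Definition in_unit (x : R) := 0 <= x /\ x <= 1.

Definition alpha (q : profile) (i : 'I_N) : R := \prod_(j < N | j != i) (1 - q j).

Definition gamma (q : profile) (i : 'I_N) : R := q i * alpha q i.

Definition gamma_bar_others (q : profile) (i : 'I_N) : R :=
  (N.-1)%:R^-1 * \sum_(j < N | j != i) gamma q j.

(* net utility, extended-real valued, with log 0 = -oo *)
Definition utility (C A M : 'I_N -> R) (q : profile) (i : 'I_N) : \bar R :=
  if 0 < gamma q i then
    (C i * ln (gamma q i) + A i * alpha q i * gamma_bar_others q i - M i * q i)%:E
  else -oo%E.

Definition update (q : profile) (i : 'I_N) (x : R) : profile :=
  fun j => if j == i then x else q j.

Definition nash_equilibrium (C A M : 'I_N -> R) (q : profile) : Prop :=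
  (forall i, in_unit (q i)) /\
  forall i (x : R), in_unit x ->
    (utility C A M (update q i x) i <= utility C A M q i)%E.

End Aloha.

From mathcomp Require Import all_boot all_order all_algebra.
From mathcomp Require Import all_classical all_reals all_analysis.
From mathcomp Require Import zify ring.
Import Order.TTheory GRing.Theory Num.Theory.
Import numFieldNormedType.Exports.
Local Open Scope ring_scope.

(* When every opponent plays [q], player [i] deviating to [x > 0] earns
   [C ln x + (const) - x M (1 + a q B D)] with [B = (1-q)^(N-1)] and
   [D = (1-q)^(N-2)], a strictly concave function of [x].  Its maximiser
   solves [c = x (1 + a q B D)], and [x = q] is a solution exactly when
   [c = q + a q^2 (1-q)^(2N-3)], i.e. [f q = 0].  A root of [f] in [(0, c]]
   exists by the intermediate value theorem, since [f 0 = -c < 0 <= f c]. *)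

Lemma ln_sub_le_div {R : realType} (x y : R) :
  0 < x -> 0 < y -> ln x - ln y <= (x - y) / y.
Proof.
move=> x0 y0; rewrite -ln_div ?posrE // mulrBl divff ?gt_eqF //.
have := @le_ln1Dx R (x / y - 1); rewrite addrCA subrr addr0; apply.
by rewrite ltrBrDr addNr divr_gt0.
Qed.

Lemma exists_aloha_root {R : realType} (k : nat) (a c : R) :
  0 <= a -> 0 < c -> c <= 1 ->
  exists2 q, 0 < q <= c & a * q ^+ 2 * (1 - q) ^+ k + q - c = 0.
Proof.
move=> a0 c0 c1; pose f (y : R) := a * (y ^+ 2 * (1 - y) ^+ k) + y - c.
have f_cont : continuous f.
  move=> y; apply: cvgB; [apply: cvgD; [|exact: cvg_id] | exact: cvg_cst].
  by apply: cvgM; [exact: cvg_cst | exact: (@continuous_XMonemX R 2 k)].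
have f0 : f 0 = - c by rewrite /f expr0n /= !mul0r mulr0 !add0r.
have fc : 0 <= f c.
  by rewrite /f addrK mulr_ge0 // mulr_ge0 // exprn_ge0 ?subr_ge0 // ltW.
have [q] : exists2 q, q \in `[0, c] & f q = 0.
  apply: IVT; first exact: ltW.
    exact: continuous_subspaceT.
  by rewrite f0 ge_min le_max oppr_le0 ltW // fc orbT.
rewrite in_itv /= => /andP[q0 qc] fq; exists q; last by rewrite -mulrA.
rewrite qc andbT lt_neqAle q0 andbT; apply: contra_eqN fq => /eqP <-.
by rewrite f0 oppr_eq0 gt_eqF.
Qed.

Lemma update_self {R : realType} {N : nat} (p : profile R N) (i : 'I_N) :
  update p i (p i) = p.
Proof. by apply: funext => j; rewrite /update; case: eqVneq => [->|]. Qed.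

Section SymmetricDeviation.
Variables (R : realType) (N : nat) (q : R) (i : 'I_N).
Let dev (x : R) := update (fun _ : 'I_N => q) i x.

Lemma alpha_dev x : alpha (dev x) i = (1 - q) ^+ N.-1.
Proof.
rewrite /alpha (eq_bigr (fun=> 1 - q)) => [|j /negbTE ji]; last first.
  by rewrite /dev /update ji.
by rewrite (eq_bigl (mem (predC1 i))) // prodr_const cardC1 card_ord.
Qed.

Lemma gamma_dev_self x : gamma (dev x) i = x * (1 - q) ^+ N.-1.
Proof. by rewrite /gamma alpha_dev /dev /update eqxx. Qed.

Lemma gamma_dev_other x j :
  j != i -> gamma (dev x) j = q * ((1 - x) * (1 - q) ^+ N.-2).
Proof.
move=> ji; rewrite /gamma /alpha {1}/dev /update (negbTE ji).
rewrite (bigD1 i) 1?eq_sym //= /dev /update eqxx.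
rewrite (eq_bigr (fun=> 1 - q)) => [|k /andP[_ /negbTE ->] //].
rewrite (eq_bigl (mem [predD1 predC1 j & i])) => [|k]; last first.
  by rewrite !inE andbC.
have := cardD1 i (predC1 j); rewrite cardC1 card_ord !inE eq_sym ji /= => card_ij.
by rewrite prodr_const -[#|_|]/#|[predD1 predC1 j & i]| card_ij.
Qed.

Lemma gamma_bar_others_dev x : (2 <= N)%N ->
  gamma_bar_others (dev x) i = q * ((1 - x) * (1 - q) ^+ N.-2).
Proof.
move=> N2; rewrite /gamma_bar_others (eq_bigr _ (fun j => @gamma_dev_other x j)).
rewrite (eq_bigl (mem (predC1 i))) // sumr_const cardC1 card_ord.
by rewrite -[X in _ * X]mulr_natr mulrC mulfK // pnatr_eq0 -lt0n -subn1 subn_gt0.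
Qed.

Variables (C A M : 'I_N -> R).
Let B := (1 - q) ^+ N.-1.
Let D := (1 - q) ^+ N.-2.

Lemma utility_dev x : (2 <= N)%N -> q < 1 -> 0 < x ->
  utility C A M (dev x) i =
  (C i * ln (x * B) + A i * B * (q * ((1 - x) * D)) - M i * x)%:E.
Proof.
move=> N2 q1 x0; have B0 : 0 < B by rewrite exprn_gt0 // subr_gt0.
by rewrite /utility gamma_dev_self alpha_dev gamma_bar_others_dev // mulr_gt0 //
  /dev /update eqxx.
Qed.

Lemma utility_dev_nonpos x : q < 1 -> x <= 0 -> utility C A M (dev x) i = -oo%E.
Proof.
move=> q1 x0; have B0 : 0 < B by rewrite exprn_gt0 // subr_gt0.
by rewrite /utility gamma_dev_self pmulr_lgt0 // ltNge x0.
Qed.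

(* [C i = q * (M i + A i * q * B * D)] says that the derivative
   [C i / x - M i - A i * q * B * D] of the deviation payoff vanishes at [x = q]. *)
Lemma utility_dev_le x : (2 <= N)%N -> 0 < q < 1 -> 0 <= C i ->
  C i = q * (M i + A i * q * (B * D)) ->
  (utility C A M (dev x) i <= utility C A M (dev q) i)%E.
Proof.
move=> N2 /andP[q0 q1] C0 first_order.
have [x0|x0] := ltP 0 x; last by rewrite utility_dev_nonpos // leNye.
have B0 : 0 < B by rewrite exprn_gt0 // subr_gt0.
rewrite !utility_dev // lee_fin !lnM ?posrE // -subr_ge0.
have concave : C i * (ln x - ln q) <= (x - q) * (M i + A i * q * (B * D)).
  rewrite [X in _ <= X](_ : _ = C i * ((x - q) / q)).
    by rewrite ler_wpM2l // ln_sub_le_div.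
  by rewrite first_order; field; rewrite gt_eqF.
set rhs := (X in _ <= X); rewrite (_ : rhs = (x - q) * (M i + A i * q * (B * D)) -
  C i * (ln x - ln q)) ?subr_ge0 // /rhs; ring.
Qed.
End SymmetricDeviation.

Theorem proposition1 (R : realType) (N : nat) (hN : (2 <= N)%N)
  (C A M : 'I_N -> R) (c a : R)
  (hC : forall i, 0 < C i) (hM : forall i, 0 < M i) (hA : forall i, 0 <= A i)
  (hc : forall i, C i / M i = c) (ha : forall i, A i / M i = a) (hc1 : c < 1) :
  exists qs : R,
    [/\ 0 < qs, qs < 1,
        a * qs ^+ 2 * (1 - qs) ^+ (2 * N - 3) + qs - c = 0
      & nash_equilibrium C A M (fun _ : 'I_N => qs)].
Proof.
have i0 : 'I_N := Ordinal (ltnW hN).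
have c0 : 0 < c by rewrite -(hc i0) divr_gt0.
have a0 : 0 <= a by rewrite -(ha i0) divr_ge0 // ltW.
have [q /andP[q0 qc] fq] := exists_aloha_root (2 * N - 3)%N a c a0 c0 (ltW hc1).
have q1 : q < 1 by apply: le_lt_trans hc1.
have exp_split : (2 * N - 3 = N.-1 + N.-2)%N by rewrite -!subn1; lia.
have c_eq : c = q + a * q ^+ 2 * ((1 - q) ^+ N.-1 * (1 - q) ^+ N.-2).
  by move/eqP: fq; rewrite -exprD -exp_split subr_eq0 => /eqP <-; rewrite addrC.
exists q; split => //; split => [j | j x _]; first by split; apply: ltW.
rewrite -{2}(update_self (fun=> q) j); apply: utility_dev_le; rewrite ?q0 ?ltW //.
by rewrite -[C j](divfK (lt0r_neq0 (hM j))) -[A j](divfK (lt0r_neq0 (hM j))) hc ha c_eq; ring.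
Qed.
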